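(* Let $S=\{0,1,2,\dots\}$, $\lambda,\mu>0$, $\theta=\lambda/\mu$, and let $p^*_t(x,y)$ be the unique transition function on $S$ whose infinitesimal rates are $q(i,i+1)=\lambda$; $q(i,i+k)=0$ for $k\ge 2$; $q(i,i-k)=\mu$ for $i\ge1$, $1\le k\le i$; $q(i,i)=-(\lambda+i\mu)$; all other entries $0$ (equivalently, the minimal solution of the Kolmogorov backward equations for these rates, which is stochastic). For $t\ge0$, $x,n\in S$ define $$R^*_t(\delta_x,n)=\frac{\theta^n}{(\theta+1)_n}+e^{-(\theta+n)\mu t}\sum_{\rho=0}^{n}\frac{(\theta(e^{\mu t}-1))^\rho}{\rho!}\Big(\mathbf 1\{x\ge n-\rho\}-\frac{\theta^{n-\rho}}{(\theta+1)_{n-\rho}}\Big).$$ Then for all $x,y\in S$ and $t\ge0$, $$p^*_t(x,y)=R^*_t(\delta_x,y)-R^*_t(\delta_x,y+1).$$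
   Context: $(a)_n$ is the rising factorial: $(a)_0=1$, $(a)_n=a(a+1)\cdots(a+n-1)$ for $n\ge1$. *)

From Stdlib Require Import Reals Lra Lia Factorial.
From Coquelicot Require Import Coquelicot.
Open Scope R_scope.

Fixpoint rising (a : R) (n : nat) : R :=
  match n with
  | O => 1
  | S k => rising a k * (a + INR k)
  end.

Definition qrate (lam mu : R) (i j : nat) : R :=
  if Nat.eqb j (S i) then lam
  else if Nat.ltb j i then mu
  else if Nat.eqb j i then - (lam + INR i * mu)
  else 0.

Definition is_transition_function (P : R -> nat -> nat -> R) : Prop :=
  (forall t x y, 0 <= t -> 0 <= P t x y) /\
  (forall t x, 0 <= t -> is_series (fun y => P t x y) 1) /\
  (forall x y, P 0 x y = if Nat.eqb x y then 1 else 0) /\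
  (forall s t x y, 0 <= s -> 0 <= t ->
     is_series (fun z => P s x z * P t z y) (P (s + t) x y)).

Definition has_rates (q : nat -> nat -> R) (P : R -> nat -> nat -> R) : Prop :=
  forall x y,
    filterlim (fun h => (P h x y - P 0 x y) / h) (at_right 0) (locally (q x y)).

Definition Rstar (lam mu t : R) (x n : nat) : R :=
  let theta := lam / mu in
  theta ^ n / rising (theta + 1) n
  + exp (- (theta + INR n) * mu * t) *
    sum_f_R0 (fun r =>
       (theta * (exp (mu * t) - 1)) ^ r / INR (fact r) *
       ((if Nat.leb (n - r) x then 1 else 0)
        - theta ^ (n - r) / rising (theta + 1) (n - r))) n.

From Stdlib Require Import Reals Lra Lia Factorial.
From Coquelicot Require Import Coquelicot.
Open Scope R_scope.

(** Both sides solve the backward equation d/dt u_t(x) = sum_z q(x, z) u_t(z) with initial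
    value 1{x = y}, and both are bounded on bounded time intervals.  For P_t(., y) this follows
    from Chapman-Kolmogorov: the row q(x, .) vanishes beyond x + 1 and sums to 0, so the mass
    P_h(x, z) carried to z > x + 1 is o(h).  For R*_t(., y) - R*_t(., y + 1) it is a
    computation: q acts on the step functions 1{x >= k} by a two-term recurrence, which the
    stationary tails theta^k / (theta + 1)_k turn into the recurrence solved by the truncated
    exponential sums of R*.  Uniqueness is a maximum principle: a bounded solution with zero
    initial data stays below eps (x + 1) e^(2 lam t), because at a first touching point the
    generator cannot push it across this barrier. *)

Section RealLimits.

Context {T : Type} {F : (T -> Prop) -> Prop} {FF : Filter F}.

Lemma filterlim_Rplus (f g : T -> R) (a b : R) :
  filterlim f F (locally a) -> filterlim g F (locally b) ->
  filterlim (fun x => f x + g x) F (locally (a + b)).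
Proof.
  intros Hf Hg; exact (filterlim_comp_2 f g Rplus Hf Hg (@filterlim_plus _ R_NormedModule a b)).
Qed.

Lemma filterlim_Rmult (f g : T -> R) (a b : R) :
  filterlim f F (locally a) -> filterlim g F (locally b) ->
  filterlim (fun x => f x * g x) F (locally (a * b)).
Proof.
  intros Hf Hg; exact (filterlim_comp_2 f g Rmult Hf Hg (@filterlim_mult R_AbsRing a b)).
Qed.

Lemma filterlim_Ropp (f : T -> R) (a : R) :
  filterlim f F (locally a) -> filterlim (fun x => - f x) F (locally (- a)).
Proof.
  intros Hf; exact (filterlim_comp _ _ _ f Ropp F (locally a) (locally (- a)) Hf
                      (@filterlim_opp _ R_NormedModule a)).
Qed.

Lemma filterlim_Rminus (f g : T -> R) (a b : R) :
  filterlim f F (locally a) -> filterlim g F (locally b) ->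
  filterlim (fun x => f x - g x) F (locally (a - b)).
Proof. intros Hf Hg; apply filterlim_Rplus; [exact Hf | exact (filterlim_Ropp g b Hg)]. Qed.

Lemma filterlim_sum_f_R0 (f : nat -> T -> R) (l : nat -> R) (n : nat) :
  (forall r, (r <= n)%nat -> filterlim (f r) F (locally (l r))) ->
  filterlim (fun x => sum_f_R0 (fun r => f r x) n) F (locally (sum_f_R0 l n)).
Proof.
  induction n as [|n IH]; intros Hf; simpl.
  - apply Hf; lia.
  - apply filterlim_Rplus; [apply IH; intros; apply Hf; lia | apply Hf; lia].
Qed.

Lemma filterlim_eventually_lt (f : T -> R) (a c : R) :
  filterlim f F (locally a) -> a < c -> F (fun x => f x < c).
Proof.
  intros Hf Hac.
  assert (Hd : 0 < c - a) by lra.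
  generalize (proj1 (filterlim_locally f a) Hf (mkposreal _ Hd)).
  apply filter_imp; intros x Hx.
  apply Rabs_def2 in Hx; simpl in Hx; unfold minus, plus, opp in Hx; simpl in Hx; lra.
Qed.

End RealLimits.

Lemma at_right_0_interval (c : R) : 0 < c -> at_right 0 (fun h => 0 < h < c).
Proof.
  intros Hc; exists (mkposreal c Hc); intros h Hh Hpos.
  apply Rabs_def2 in Hh; simpl in Hh; unfold minus, plus, opp in Hh; simpl in Hh; lra.
Qed.

Lemma at_right_0_witness (Q : R -> Prop) :
  at_right 0 Q -> exists d, 0 < d /\ forall h, 0 < h < d -> Q h.
Proof.
  intros [d Hd]; exists d; split; [apply cond_pos |].
  intros h Hh; apply Hd; [| lra].
  apply Rabs_def1; simpl; unfold minus, plus, opp; simpl; lra.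
Qed.

Lemma filterlim_at_right_0_ext (f g : R -> R) (l : R) :
  (forall h, 0 < h -> f h = g h) ->
  filterlim f (at_right 0) (locally l) -> filterlim g (at_right 0) (locally l).
Proof. intros Hfg; apply filterlim_ext_loc; exact (filter_forall _ Hfg). Qed.

Lemma filterlim_at_right_0_id : filterlim (fun h => h) (at_right 0) (locally 0).
Proof.
  exact (filterlim_filter_le_1 _ (@filter_le_within _ (locally 0) _ _) (filterlim_id _ _)).
Qed.

Definition right_deriv (f : R -> R) (t l : R) : Prop :=
  filterlim (fun h => (f (t + h) - f t) / h) (at_right 0) (locally l).

Definition left_cont (f : R -> R) (t : R) : Prop :=
  filterlim (fun h => f (t - h)) (at_right 0) (locally (f t)).

Lemma right_deriv_right_cont (f : R -> R) (t l : R) :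
  right_deriv f t l -> filterlim (fun h => f (t + h)) (at_right 0) (locally (f t)).
Proof.
  intros Hd.
  assert (Hlim := filterlim_Rplus _ _ _ _ (filterlim_const (f t))
                    (filterlim_Rmult _ _ _ _ filterlim_at_right_0_id Hd)).
  rewrite Rmult_0_l, Rplus_0_r in Hlim.
  revert Hlim; apply filterlim_at_right_0_ext; intros h Hh; field; lra.
Qed.

Lemma right_deriv_minus (f g : R -> R) (t a b : R) :
  right_deriv f t a -> right_deriv g t b -> right_deriv (fun s => f s - g s) t (a - b).
Proof.
  intros Hf Hg; generalize (filterlim_Rminus _ _ _ _ Hf Hg).
  apply filterlim_at_right_0_ext; intros h Hh; field; lra.
Qed.

Lemma left_cont_minus (f g : R -> R) (t : R) :
  left_cont f t -> left_cont g t -> left_cont (fun s => f s - g s) t.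
Proof. intros Hf Hg; exact (filterlim_Rminus _ _ _ _ Hf Hg). Qed.

Lemma is_derive_right_deriv (f : R -> R) (t l : R) : is_derive f t l -> right_deriv f t l.
Proof.
  intros Hd; apply is_derive_Reals in Hd.
  apply filterlim_locally; intros eps.
  destruct (Hd eps (cond_pos eps)) as [d Hd'].
  exists d; intros h Hh Hpos.
  apply Hd'; [lra |].
  apply Rabs_def2 in Hh; simpl in Hh; unfold minus, plus, opp in Hh; simpl in Hh.
  rewrite Rabs_pos_eq; lra.
Qed.

Lemma is_derive_left_cont (f : R -> R) (t l : R) : is_derive f t l -> left_cont f t.
Proof.
  intros Hd.
  assert (Hcont := ex_derive_continuous f t (ex_intro _ l Hd)).
  assert (Hshift := filterlim_Rminus _ _ _ _ (filterlim_const t) filterlim_at_right_0_id).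
  rewrite Rminus_0_r in Hshift.
  exact (filterlim_comp _ _ _ _ f _ _ _ Hshift Hcont).
Qed.

Lemma is_series_partial_le (a : nat -> R) (A : R) (K : nat) :
  (forall n, 0 <= a n) -> is_series a A -> sum_f_R0 a K <= A.
Proof. intros Ha HA; apply is_series_Reals in HA; exact (sum_incr a K A HA Ha). Qed.

Lemma is_series_term_le (a : nat -> R) (A : R) (k : nat) :
  (forall n, 0 <= a n) -> is_series a A -> a k <= A.
Proof.
  intros Ha HA; apply Rle_trans with (sum_f_R0 a k); [| exact (is_series_partial_le a A k Ha HA)].
  destruct k as [|k]; simpl; [lra |].
  pose proof (cond_pos_sum a k Ha); lra.
Qed.

Lemma is_series_dominated_partial (a b : nat -> R) (A B : R) (K : nat) :
  (forall n, 0 <= a n <= b n) -> is_series a A -> is_series b B ->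
  0 <= A - sum_f_R0 a K <= B - sum_f_R0 b K.
Proof.
  intros Hab HA HB.
  assert (Hgap := is_series_partial_le (fun n => b n - a n) (B - A) K
                    ltac:(intros n; specialize (Hab n); lra) (is_series_minus _ _ _ _ HB HA)).
  rewrite minus_sum in Hgap.
  pose proof (is_series_partial_le a A K (fun n => proj1 (Hab n)) HA); lra.
Qed.

Lemma is_series_dominated_term (a b : nat -> R) (A B : R) (k : nat) :
  (forall n, 0 <= a n <= b n) -> is_series a A -> is_series b B -> 0 <= A - a k <= B - b k.
Proof.
  intros Hab HA HB.
  assert (Hgap := is_series_term_le (fun n => b n - a n) (B - A) k
                    ltac:(intros n; specialize (Hab n); lra) (is_series_minus _ _ _ _ HB HA)).
  pose proof (is_series_term_le a A k (fun n => proj1 (Hab n)) HA); cbv beta in Hgap; lra.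
Qed.

Lemma sum_f_R0_kronecker (f : nat -> R) (x K : nat) : (x <= K)%nat ->
  sum_f_R0 (fun z => (if Nat.eqb x z then 1 else 0) * f z) K = f x.
Proof.
  induction K as [|K IH]; intros Hx.
  - replace x with 0%nat by lia; simpl; ring.
  - rewrite tech5; destruct (Nat.eqb_spec x (S K)) as [-> | Hne].
    + rewrite (sum_eq _ (fun _ => 0)), sum_cte; [ring |].
      intros z Hz; destruct (Nat.eqb_spec (S K) z); [lia | ring].
    + rewrite IH by lia; ring.
Qed.

(** * The generator *)

(* Since q(x, z) = 0 for z > x + 1, this is the full row sum of q(x, .) f. *)
Definition generator (lam mu : R) (f : nat -> R) (x : nat) : R :=
  sum_f_R0 (fun z => qrate lam mu x z * f z) (S x).

Lemma qrate_succ (lam mu : R) (x : nat) : qrate lam mu x (S x) = lam.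
Proof. unfold qrate; rewrite Nat.eqb_refl; reflexivity. Qed.

Lemma qrate_diag (lam mu : R) (x : nat) : qrate lam mu x x = - (lam + INR x * mu).
Proof.
  unfold qrate; destruct (Nat.eqb_spec x (S x)); [lia |].
  destruct (Nat.ltb_spec x x); [lia |]; rewrite Nat.eqb_refl; reflexivity.
Qed.

Lemma qrate_lt (lam mu : R) (x z : nat) : (z < x)%nat -> qrate lam mu x z = mu.
Proof.
  intros Hz; unfold qrate; destruct (Nat.eqb_spec z (S x)); [lia |].
  destruct (Nat.ltb_spec z x); [reflexivity | lia].
Qed.

Lemma qrate_offdiag_nonneg (lam mu : R) (x z : nat) :
  0 <= lam -> 0 <= mu -> z <> x -> 0 <= qrate lam mu x z.
Proof.
  intros Hlam Hmu Hzx; unfold qrate.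
  destruct (Nat.eqb_spec z (S x)); [exact Hlam |].
  destruct (Nat.ltb_spec z x); [exact Hmu |].
  destruct (Nat.eqb_spec z x); [lia | lra].
Qed.

Lemma generator_explicit (lam mu : R) (f : nat -> R) (x : nat) :
  generator lam mu f x = lam * f (S x) + mu * sum_f_R0 f x - (lam + INR (S x) * mu) * f x.
Proof.
  unfold generator; rewrite tech5, qrate_succ.
  destruct x as [|x]; simpl sum_f_R0; rewrite ?tech5, qrate_diag.
  - simpl INR; ring.
  - rewrite (sum_eq _ (fun z => f z * mu))
      by (intros z Hz; rewrite qrate_lt by lia; apply Rmult_comm).
    rewrite <- (scal_sum f x mu), !S_INR; ring.
Qed.

Lemma generator_ext (lam mu : R) (f g : nat -> R) (x : nat) :
  (forall z, f z = g z) -> generator lam mu f x = generator lam mu g x.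
Proof. intros Hfg; apply sum_eq; intros z _; rewrite Hfg; reflexivity. Qed.

Lemma generator_plus (lam mu : R) (f g : nat -> R) (x : nat) :
  generator lam mu (fun z => f z + g z) x = generator lam mu f x + generator lam mu g x.
Proof. rewrite !generator_explicit, plus_sum; ring. Qed.

Lemma generator_scal (lam mu k : R) (f : nat -> R) (x : nat) :
  generator lam mu (fun z => k * f z) x = k * generator lam mu f x.
Proof.
  rewrite !generator_explicit, (sum_eq _ (fun z => f z * k)) by (intros; ring).
  rewrite <- scal_sum; ring.
Qed.

Lemma generator_const (lam mu k : R) (x : nat) : generator lam mu (fun _ => k) x = 0.
Proof. rewrite generator_explicit, sum_cte; ring. Qed.

Lemma generator_minus (lam mu : R) (f g : nat -> R) (x : nat) :
  generator lam mu (fun z => f z - g z) x = generator lam mu f x - generator lam mu g x.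
Proof.
  rewrite (generator_ext _ _ _ (fun z => f z + -1 * g z)) by (intros; ring).
  rewrite generator_plus, generator_scal; ring.
Qed.

Lemma generator_sum (lam mu : R) (g : nat -> nat -> R) (n x : nat) :
  generator lam mu (fun z => sum_f_R0 (fun r => g r z) n) x
  = sum_f_R0 (fun r => generator lam mu (g r) x) n.
Proof.
  induction n as [|n IH]; simpl; [reflexivity |].
  rewrite generator_plus, IH; reflexivity.
Qed.

Lemma generator_le_touching (lam mu : R) (f g : nat -> R) (x : nat) :
  0 <= lam -> 0 <= mu -> (forall z, f z <= g z) -> f x = g x ->
  generator lam mu f x <= generator lam mu g x.
Proof.
  intros Hlam Hmu Hfg Hx; apply sum_Rle; intros z _.
  destruct (Nat.eq_dec z x) as [-> | Hzx]; [rewrite Hx; lra |].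
  apply Rmult_le_compat_l; [exact (qrate_offdiag_nonneg lam mu x z Hlam Hmu Hzx) | apply Hfg].
Qed.

Lemma generator_linear_growth_le (lam mu c : R) (x : nat) :
  0 <= mu -> 0 <= c -> generator lam mu (fun z => c * (INR z + 1)) x <= lam * c.
Proof.
  intros Hmu Hc; rewrite generator_explicit.
  assert (Hsum : sum_f_R0 (fun z => c * (INR z + 1)) x <= c * (INR x + 1) * INR (S x)).
  { rewrite <- sum_cte; apply sum_Rle; intros z Hz.
    apply Rmult_le_compat_l; [exact Hc |]; apply le_INR in Hz; lra. }
  rewrite !S_INR in *; nra.
Qed.

(** * Uniqueness for the backward equation *)

Section FirstCrossing.

Variables (phi : nat -> R -> R) (t0 : R) (N : nat).

Hypothesis phi_init : forall x, phi x 0 <= 0.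
Hypothesis phi_far : forall x s, (N <= x)%nat -> 0 <= s <= t0 -> phi x s <= 0.
Hypothesis phi_right_cont :
  forall x t, 0 <= t -> filterlim (fun h => phi x (t + h)) (at_right 0) (locally (phi x t)).
Hypothesis phi_left_cont : forall x t, 0 < t -> left_cont (phi x) t.
Hypothesis phi_touch : forall x t, 0 <= t -> (forall z, phi z t <= 0) -> phi x t = 0 ->
  exists2 l, l < 0 & right_deriv (phi x) t l.

Lemma nonpos_persists (t : R) (x : nat) : 0 <= t -> (forall z, phi z t <= 0) ->
  at_right 0 (fun h => phi x (t + h) <= 0).
Proof.
  intros Ht Hall; destruct (Rle_lt_or_eq_dec _ _ (Hall x)) as [Hneg | Hzero].
  - apply (filter_imp _ _ (fun h => Rlt_le _ _)).
    exact (filterlim_eventually_lt _ _ _ (phi_right_cont x t Ht) Hneg).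
  - destruct (phi_touch x t Ht Hall Hzero) as [l Hl Hd].
    generalize (filter_and _ _ (filterlim_eventually_lt _ _ _ Hd Hl)
                  (at_right_0_interval 1 Rlt_0_1)).
    apply filter_imp; intros h [Hq Hh]; rewrite Hzero, Rminus_0_r in Hq.
    replace (phi x (t + h)) with (phi x (t + h) / h * h) by (field; lra); nra.
Qed.

Lemma nonpos_persists_lt (t : R) (n : nat) : 0 <= t -> (forall z, phi z t <= 0) ->
  at_right 0 (fun h => forall x, (x < n)%nat -> phi x (t + h) <= 0).
Proof.
  intros Ht Hall; induction n as [|n IH].
  - apply filter_forall; intros h x Hx; lia.
  - generalize (filter_and _ _ IH (nonpos_persists t n Ht Hall)).
    apply filter_imp; intros h [Hlt Hn] x Hx.
    destruct (Nat.eq_dec x n) as [-> | Hne]; [exact Hn | apply Hlt; lia].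
Qed.

Lemma nonpos_at_left_limit (x : nat) (t : R) : 0 <= t ->
  (forall u, 0 <= u < t -> phi x u <= 0) -> phi x t <= 0.
Proof.
  intros Ht Hbefore; destruct (Rle_lt_or_eq_dec _ _ Ht) as [Hpos | <-]; [| apply phi_init].
  apply (filterlim_le (F := at_right 0) (fun h => phi x (t - h)) (fun _ => 0) (phi x t) 0);
    [| exact (phi_left_cont x t Hpos) | apply filterlim_const].
  generalize (at_right_0_interval t Hpos); apply filter_imp.
  intros h Hh; apply Hbefore; lra.
Qed.

(* First crossing: the supremum of the times up to which the whole family stays
   nonpositive cannot lie before t0. *)
Lemma family_nonpos (x : nat) (s : R) : 0 <= s <= t0 -> phi x s <= 0.
Proof.
  intros Hs.
  set (E := fun u => 0 <= u <= t0 /\ forall u' z, 0 <= u' <= u -> phi z u' <= 0).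
  assert (HE0 : E 0).
  { split; [lra |]; intros u' z Hu'; replace u' with 0 by lra; apply phi_init. }
  assert (HEb : bound E) by (exists t0; intros u [Hu _]; lra).
  destruct (completeness E HEb (ex_intro _ 0 HE0)) as [ts [Hub Hlub]].
  assert (Hts : 0 <= ts <= t0).
  { split; [exact (Hub 0 HE0) | apply Hlub; intros u [Hu _]; lra]. }
  assert (Hbefore : forall u z, 0 <= u < ts -> phi z u <= 0).
  { intros u z Hu; apply Rnot_lt_le; intros Hpos.
    enough (ts <= u) by lra.
    apply Hlub; intros e [_ He]; apply Rnot_lt_le; intros Hue.
    specialize (He u z ltac:(lra)); lra. }
  assert (Hat : forall z, phi z ts <= 0).
  { intros z; apply nonpos_at_left_limit; [lra |]; intros u Hu; apply Hbefore; lra. }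
  assert (Hend : ts = t0).
  { destruct (Rle_lt_or_eq_dec _ _ (proj2 Hts)) as [Hlt | Heq]; [| exact Heq].
    destruct (at_right_0_witness _ (nonpos_persists_lt ts N (proj1 Hts) Hat))
      as [d [Hd Hnear]].
    set (h := Rmin d (t0 - ts) / 2).
    assert (Hh : 0 < h < d /\ ts + h <= t0).
    { assert (0 < Rmin d (t0 - ts)) by (apply Rmin_pos; lra).
      pose proof (Rmin_l d (t0 - ts)); pose proof (Rmin_r d (t0 - ts)); unfold h; lra. }
    enough (Hin : E (ts + h)) by (specialize (Hub _ Hin); lra).
    split; [lra |]; intros u z Hu.
    destruct (Rlt_or_le u ts) as [Hu' | Hu']; [apply Hbefore; lra |].
    destruct (Rle_lt_or_eq_dec _ _ Hu') as [Hu'' | <-]; [| apply Hat].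
    destruct (Nat.lt_ge_cases z N) as [HzN | HzN]; [| apply phi_far; [exact HzN | lra]].
    replace u with (ts + (u - ts)) by ring; apply Hnear; [lra | exact HzN]. }
  destruct (Rle_lt_or_eq_dec _ _ (proj2 Hs)) as [Hlt | ->]; [apply Hbefore; lra |].
  rewrite <- Hend; apply Hat.
Qed.

End FirstCrossing.

(* Only one-sided regularity in time is asked for: the rates give P_t right derivatives. *)
Definition solves_backward (lam mu : R) (D : R -> nat -> R) : Prop :=
  (forall x t, 0 <= t -> right_deriv (fun s => D s x) t (generator lam mu (D t) x)) /\
  (forall x t, 0 < t -> left_cont (fun s => D s x) t).

Lemma solves_backward_minus (lam mu : R) (D1 D2 : R -> nat -> R) :
  solves_backward lam mu D1 -> solves_backward lam mu D2 ->
  solves_backward lam mu (fun s z => D1 s z - D2 s z).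
Proof.
  intros [Hd1 Hc1] [Hd2 Hc2]; split; intros x t Ht.
  - rewrite generator_minus; exact (right_deriv_minus _ _ _ _ _ (Hd1 x t Ht) (Hd2 x t Ht)).
  - exact (left_cont_minus _ _ _ (Hc1 x t Ht) (Hc2 x t Ht)).
Qed.

(* The generator sends c (x + 1) to at most lam c, so the time rate 2 lam makes the
   barrier a strict supersolution. *)
Definition growth_barrier (lam eps s : R) (x : nat) : R :=
  eps * (INR x + 1) * exp (2 * lam * s).

Lemma is_derive_growth_barrier (lam eps s : R) (x : nat) :
  is_derive (fun u => growth_barrier lam eps u x) s (2 * lam * growth_barrier lam eps s x).
Proof. unfold growth_barrier; auto_derive; [exact I | ring]. Qed.

Lemma growth_barrier_ge (lam eps s : R) (x : nat) : 0 <= lam -> 0 <= eps -> 0 <= s ->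
  eps * (INR x + 1) <= growth_barrier lam eps s x.
Proof.
  intros Hlam Heps Hs; unfold growth_barrier.
  pose proof (exp_ineq1_le (2 * lam * s)); pose proof (pos_INR x).
  rewrite <- (Rmult_1_r (eps * (INR x + 1))) at 1.
  apply Rmult_le_compat_l; nra.
Qed.

Lemma generator_growth_barrier_slope (lam mu eps t : R) (f : nat -> R) (x : nat) :
  0 < lam -> 0 <= mu -> 0 < eps ->
  (forall z, f z <= growth_barrier lam eps t z) -> f x = growth_barrier lam eps t x ->
  generator lam mu f x - 2 * lam * growth_barrier lam eps t x < 0.
Proof.
  intros Hlam Hmu Heps Hle Hx.
  set (k := eps * exp (2 * lam * t)).
  assert (Hk : 0 < lam * k) by (apply Rmult_lt_0_compat; [| apply Rmult_lt_0_compat, exp_pos]; lra).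
  assert (Hkx : 0 <= lam * k * INR x) by (apply Rmult_le_pos; [lra | apply pos_INR]).
  assert (Htouch := generator_le_touching lam mu _ _ x (Rlt_le _ _ Hlam) Hmu Hle Hx).
  rewrite (generator_ext _ _ (growth_barrier lam eps t) (fun z => k * (INR z + 1)))
    in Htouch by (intros; unfold growth_barrier, k; ring).
  assert (Hgrowth := generator_linear_growth_le lam mu k x Hmu
                       ltac:(pose proof (exp_pos (2 * lam * t)); unfold k; nra)).
  replace (2 * lam * growth_barrier lam eps t x) with (2 * (lam * k * INR x) + 2 * (lam * k))
    by (unfold growth_barrier, k; ring).
  lra.
Qed.

Section MaximumPrinciple.

Variables (lam mu : R) (D : R -> nat -> R).

Hypothesis lam_pos : 0 < lam.
Hypothesis mu_nonneg : 0 <= mu.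
Hypothesis D_solves : solves_backward lam mu D.
Hypothesis D_init : forall x, D 0 x <= 0.
Hypothesis D_bounded :
  forall t0, 0 <= t0 -> exists B, forall t x, 0 <= t <= t0 -> D t x <= B.

Lemma below_growth_barrier_far (eps t0 : R) : 0 < eps -> 0 <= t0 ->
  exists N, forall x s, (N <= x)%nat -> 0 <= s <= t0 -> D s x <= growth_barrier lam eps s x.
Proof.
  intros Heps Ht0; destruct (D_bounded t0 Ht0) as [B HB].
  destruct (nfloor_ex (Rmax 0 (B / eps)) (Rmax_l _ _)) as [n Hn].
  exists (S n); intros x s Hx Hs.
  apply le_INR in Hx; rewrite S_INR in Hx.
  assert (HBn : B < eps * (INR n + 1)).
  { pose proof (Rmax_r 0 (B / eps)).
    replace B with (eps * (B / eps)) by (field; lra); apply Rmult_lt_compat_l; lra. }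
  pose proof (HB s x Hs); pose proof (growth_barrier_ge lam eps s x (Rlt_le _ _ lam_pos)
                                        (Rlt_le _ _ Heps) (proj1 Hs)).
  nra.
Qed.

Lemma below_growth_barrier (eps t0 : R) (x : nat) (s : R) :
  0 < eps -> 0 <= s <= t0 -> D s x <= growth_barrier lam eps s x.
Proof.
  intros Heps Hs; destruct D_solves as [Hderiv Hleft].
  destruct (below_growth_barrier_far eps t0 Heps ltac:(lra)) as [N Hfar].
  assert (Hslope : forall z t, 0 <= t ->
            right_deriv (fun u => D u z - growth_barrier lam eps u z) t
              (generator lam mu (D t) z - 2 * lam * growth_barrier lam eps t z)).
  { intros z t Ht; apply right_deriv_minus; [exact (Hderiv z t Ht) |].
    exact (is_derive_right_deriv _ _ _ (is_derive_growth_barrier lam eps t z)). }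
  enough (D s x - growth_barrier lam eps s x <= 0) by lra.
  apply (family_nonpos (fun z u => D u z - growth_barrier lam eps u z) t0 N);
    [intros z | intros z u Hz Hu | intros z t Ht | intros z t Ht | intros z t Ht Hall Hz
    | exact Hs].
  - pose proof (D_init z); pose proof (growth_barrier_ge lam eps 0 z (Rlt_le _ _ lam_pos)
                                         (Rlt_le _ _ Heps) (Rle_refl 0)).
    pose proof (pos_INR z); nra.
  - pose proof (Hfar z u Hz Hu); lra.
  - exact (right_deriv_right_cont _ _ _ (Hslope z t Ht)).
  - apply left_cont_minus; [exact (Hleft z t Ht) |].
    exact (is_derive_left_cont _ _ _ (is_derive_growth_barrier lam eps t z)).
  - exists (generator lam mu (D t) z - 2 * lam * growth_barrier lam eps t z);
      [| exact (Hslope z t Ht)].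
    apply generator_growth_barrier_slope; try assumption.
    + intros w; specialize (Hall w); simpl in Hall; lra.
    + simpl in Hz; lra.
Qed.

Lemma backward_nonpos (t : R) (x : nat) : 0 <= t -> D t x <= 0.
Proof.
  intros Ht; apply Rle_plus_epsilon; intros eps Heps.
  pose proof (pos_INR x); pose proof (exp_pos (2 * lam * t)).
  set (c := (INR x + 1) * exp (2 * lam * t)).
  assert (Hc : 0 < c) by (unfold c; nra).
  assert (Hb := below_growth_barrier (eps / c) t x t (Rdiv_lt_0_compat _ _ Heps Hc)
                  (conj Ht (Rle_refl t))).
  replace (growth_barrier lam (eps / c) t x) with eps in Hb
    by (unfold growth_barrier, c; field; lra).
  lra.
Qed.

End MaximumPrinciple.

Theorem backward_unique (lam mu : R) (D1 D2 : R -> nat -> R) :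
  0 < lam -> 0 <= mu -> solves_backward lam mu D1 -> solves_backward lam mu D2 ->
  (forall x, D1 0 x = D2 0 x) ->
  (forall t0, 0 <= t0 -> exists B, forall t x, 0 <= t <= t0 -> Rabs (D1 t x - D2 t x) <= B) ->
  forall t x, 0 <= t -> D1 t x = D2 t x.
Proof.
  intros Hlam Hmu H1 H2 Hinit Hbound t x Ht.
  assert (Hgap : forall t0, 0 <= t0 -> exists B, forall s z, 0 <= s <= t0 ->
                   D1 s z - D2 s z <= B /\ D2 s z - D1 s z <= B).
  { intros t0 Ht0; destruct (Hbound t0 Ht0) as [B HB]; exists B; intros s z Hs.
    specialize (HB s z Hs); apply Rabs_le_between in HB; lra. }
  assert (H12 := backward_nonpos lam mu (fun s z => D1 s z - D2 s z) Hlam Hmu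
                   (solves_backward_minus _ _ _ _ H1 H2)).
  assert (H21 := backward_nonpos lam mu (fun s z => D2 s z - D1 s z) Hlam Hmu
                   (solves_backward_minus _ _ _ _ H2 H1)).
  enough (D1 t x - D2 t x <= 0 /\ D2 t x - D1 t x <= 0) by lra.
  split; [apply H12 | apply H21]; try exact Ht; try (intros z; rewrite Hinit; lra);
    intros t0 Ht0; destruct (Hgap t0 Ht0) as [B HB]; exists B; intros s z Hs; apply HB, Hs.
Qed.

(** * Transition functions with rates q *)

Section TransitionFunction.

Variables (lam mu : R) (P : R -> nat -> nat -> R).

Hypothesis P_trans : is_transition_function P.
Hypothesis P_rates : has_rates (qrate lam mu) P.

Lemma P_le_1 (t : R) (x y : nat) : 0 <= t -> P t x y <= 1.
Proof.
  destruct P_trans as (Hnonneg & Hsum & _); intros Ht.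
  exact (is_series_term_le (fun z => P t x z) 1 y (fun z => Hnonneg t x z Ht) (Hsum t x Ht)).
Qed.

Lemma P_mul_le (h t : R) (x y z : nat) : 0 <= h -> 0 <= t ->
  0 <= P h x z * P t z y <= P h x z.
Proof.
  destruct P_trans as (Hnonneg & _); intros Hh Ht.
  pose proof (Hnonneg h x z Hh); pose proof (Hnonneg t z y Ht); pose proof (P_le_1 t z y Ht); nra.
Qed.

Lemma P_at_0_sum (f : nat -> R) (x K : nat) : (x <= K)%nat ->
  sum_f_R0 (fun z => P 0 x z * f z) K = f x.
Proof.
  destruct P_trans as (_ & _ & H0 & _); intros Hx.
  rewrite (sum_eq _ (fun z => (if Nat.eqb x z then 1 else 0) * f z))
    by (intros z _; rewrite H0; reflexivity).
  exact (sum_f_R0_kronecker f x K Hx).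
Qed.

Lemma P_increment_bound (t h : R) (x y : nat) : 0 <= t -> 0 <= h ->
  Rabs (P (t + h) x y - P t x y) <= 1 - P h x x.
Proof.
  destruct P_trans as (Hnonneg & Hsum & _ & Hck); intros Ht Hh.
  assert (HA := Hck h t x y Hh Ht); rewrite Rplus_comm in HA.
  assert (Hgap := is_series_dominated_term _ _ _ _ x (fun z => P_mul_le h t x y z Hh Ht)
                    HA (Hsum h x Hh)).
  pose proof (Hnonneg t x y Ht); pose proof (P_le_1 t x y Ht); pose proof (P_le_1 h x x Hh).
  apply Rabs_le; nra.
Qed.

Lemma P_right_deriv_0 (x y : nat) : right_deriv (fun s => P s x y) 0 (qrate lam mu x y).
Proof.
  generalize (P_rates x y); apply filterlim_at_right_0_ext.
  intros h _; rewrite Rplus_0_l; reflexivity.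
Qed.

Lemma P_left_cont (x y : nat) (t : R) : 0 < t -> left_cont (fun s => P s x y) t.
Proof.
  destruct P_trans as (_ & _ & H0 & _); intros Ht.
  assert (Hdiag := right_deriv_right_cont _ _ _ (P_right_deriv_0 x x)).
  cbv beta in Hdiag; rewrite H0, Nat.eqb_refl in Hdiag.
  assert (Hgap := filterlim_Rminus _ _ _ _ (filterlim_const 1) Hdiag).
  rewrite Rminus_diag in Hgap.
  assert (Hlo := filterlim_Rminus _ _ _ _ (filterlim_const (P t x y)) Hgap).
  assert (Hhi := filterlim_Rplus _ _ _ _ (filterlim_const (P t x y)) Hgap).
  rewrite Rminus_0_r in Hlo; rewrite Rplus_0_r in Hhi.
  apply (filterlim_le_le (F := at_right 0) (fun h => P t x y - (1 - P (0 + h) x x)) _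
           (fun h => P t x y + (1 - P (0 + h) x x)) (Finite (P t x y)));
    [| exact Hlo | exact Hhi].
  generalize (at_right_0_interval t Ht); apply filter_imp; intros h Hh.
  assert (Hb := P_increment_bound (t - h) h x y ltac:(lra) ltac:(lra)).
  replace (t - h + h) with t in Hb by ring; rewrite Rplus_0_l.
  apply Rabs_le_between in Hb; lra.
Qed.

(* The rows of q are conservative, so no mass leaves {0, ..., x + 1} at first order. *)
Lemma P_exit_lim (x : nat) :
  filterlim (fun h => (1 - sum_f_R0 (P h x) (S x)) / h) (at_right 0) (locally 0).
Proof.
  assert (Hcons : sum_f_R0 (qrate lam mu x) (S x) = 0).
  { rewrite <- (generator_const lam mu 1 x); apply sum_eq; intros; ring. }
  assert (Hone : sum_f_R0 (P 0 x) (S x) = 1).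
  { rewrite <- (P_at_0_sum (fun _ => 1) x (S x)) by lia; apply sum_eq; intros; ring. }
  assert (Hlim := filterlim_Ropp _ _ (filterlim_sum_f_R0 _ _ (S x) (fun z _ => P_rates x z))).
  cbv beta in Hlim; rewrite Hcons, Ropp_0 in Hlim; revert Hlim.
  apply filterlim_at_right_0_ext; intros h Hh.
  rewrite (sum_eq _ (fun z => (P h x z - P 0 x z) * / h)) by reflexivity.
  rewrite <- scal_sum, minus_sum, Hone; field; lra.
Qed.

Lemma P_backward (x y : nat) (t : R) : 0 <= t ->
  right_deriv (fun s => P s x y) t (generator lam mu (fun z => P t z y) x).
Proof.
  destruct P_trans as (_ & Hsum & _ & Hck); intros Ht.
  set (tail h := P (t + h) x y - sum_f_R0 (fun z => P h x z * P t z y) (S x)).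
  assert (Hmain : filterlim (fun h => sum_f_R0 (fun z => (P h x z - P 0 x z) / h * P t z y) (S x))
                    (at_right 0) (locally (generator lam mu (fun z => P t z y) x))).
  { apply filterlim_sum_f_R0; intros z _.
    exact (filterlim_Rmult _ _ _ _ (P_rates x z) (filterlim_const _)). }
  assert (Htail : filterlim (fun h => tail h / h) (at_right 0) (locally 0)).
  { apply (filterlim_le_le (F := at_right 0) (fun _ => 0) _
             (fun h => (1 - sum_f_R0 (P h x) (S x)) / h) (Finite 0));
      [| apply filterlim_const | exact (P_exit_lim x)].
    generalize (at_right_0_interval 1 Rlt_0_1); apply filter_imp; intros h Hh.
    assert (HA := Hck h t x y ltac:(lra) Ht); rewrite Rplus_comm in HA.
    assert (Hgap := is_series_dominated_partial _ _ _ _ (S x)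
                      (fun z => P_mul_le h t x y z ltac:(lra) Ht) HA (Hsum h x ltac:(lra))).
    unfold tail; split; [apply Rmult_le_pos | apply Rmult_le_compat_r];
      try (left; apply Rinv_0_lt_compat); lra. }
  generalize (filterlim_Rplus _ _ _ _ Hmain Htail); rewrite Rplus_0_r.
  apply filterlim_at_right_0_ext; intros h Hh.
  assert (Hstart := P_at_0_sum (fun z => P t z y) x (S x) ltac:(lia)); cbv beta in Hstart.
  unfold tail; rewrite <- Hstart.
  rewrite (sum_eq _ (fun z => (P h x z * P t z y - P 0 x z * P t z y) * / h))
    by (intros; unfold Rdiv; ring).
  rewrite <- scal_sum, minus_sum; field; lra.
Qed.

Lemma P_solves_backward (y : nat) : solves_backward lam mu (fun s z => P s z y).
Proof. split; intros x t Ht; [exact (P_backward x y t Ht) | exact (P_left_cont x y t Ht)]. Qed.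

End TransitionFunction.

(** * The function R* *)

Definition ge_ind (k x : nat) : R := if Nat.leb k x then 1 else 0.

(* R*_t(delta_x, n) is the probability of being at or above n at time t, and
   stat_tail theta n = theta^n / (theta+1)_n is its limit as t -> oo. *)
Definition stat_tail (th : R) (k : nat) : R := th ^ k / rising (th + 1) k.

Definition tail_dev (th : R) (k x : nat) : R := ge_ind k x - stat_tail th k.

(* The coefficient of X^n in e^(u X) sum_k C(k) X^k, so d/du lowers n by one. *)
Definition expconv (C : nat -> R) (n : nat) (u : R) : R :=
  sum_f_R0 (fun r => u ^ r / INR (fact r) * C (n - r)%nat) n.

Lemma Rstar_eq (lam mu t : R) (x n : nat) :
  Rstar lam mu t x n = stat_tail (lam / mu) n + exp (- (lam / mu + INR n) * mu * t) *
    expconv (fun k => tail_dev (lam / mu) k x) n (lam / mu * (exp (mu * t) - 1)).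
Proof. reflexivity. Qed.

Lemma sum_ge_ind (k x : nat) : sum_f_R0 (ge_ind (S k)) x = INR (x - k).
Proof.
  induction x as [|x IH]; [reflexivity |].
  rewrite tech5, IH; unfold ge_ind; destruct (Nat.leb_spec (S k) (S x)).
  - replace (S x - k)%nat with (S (x - k)) by lia; rewrite S_INR; ring.
  - replace (S x - k)%nat with 0%nat by lia; replace (x - k)%nat with 0%nat by lia; simpl; ring.
Qed.

Lemma generator_ge_ind (lam mu : R) (k x : nat) :
  generator lam mu (ge_ind (S k)) x = lam * ge_ind k x - (lam + INR (S k) * mu) * ge_ind (S k) x.
Proof.
  rewrite generator_explicit, sum_ge_ind; unfold ge_ind.
  destruct (Nat.leb_spec (S k) (S x)), (Nat.leb_spec k x), (Nat.leb_spec (S k) x); try lia.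
  - rewrite minus_INR, !S_INR by lia; ring.
  - replace x with k by lia; rewrite Nat.sub_diag; simpl; ring.
  - replace (x - k)%nat with 0%nat by lia; simpl; ring.
Qed.

Lemma rising_pos (a : R) (k : nat) : 0 < a -> 0 < rising a k.
Proof.
  intros Ha; induction k as [|k IH]; simpl; [lra |].
  apply Rmult_lt_0_compat; [exact IH | pose proof (pos_INR k); lra].
Qed.

Lemma stat_tail_succ (th : R) (k : nat) :
  0 < th -> stat_tail th (S k) * (th + INR (S k)) = th * stat_tail th k.
Proof.
  intros Hth; unfold stat_tail; simpl rising.
  assert (0 < rising (th + 1) k) by (apply rising_pos; lra).
  pose proof (pos_INR k); rewrite S_INR; simpl pow; field; lra.
Qed.

Lemma tail_dev_0 (th : R) (x : nat) : tail_dev th 0 x = 0.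
Proof. unfold tail_dev, stat_tail, ge_ind; simpl; field. Qed.

Lemma generator_tail_dev (lam mu : R) (k x : nat) : 0 < lam -> 0 < mu ->
  generator lam mu (tail_dev (lam / mu) (S k)) x
  = mu * (lam / mu * tail_dev (lam / mu) k x
          - (lam / mu + INR (S k)) * tail_dev (lam / mu) (S k) x).
Proof.
  intros Hlam Hmu; set (th := lam / mu).
  assert (Hrec := stat_tail_succ th k (Rdiv_lt_0_compat _ _ Hlam Hmu)).
  assert (Hth : lam = th * mu) by (unfold th; field; lra).
  unfold tail_dev; rewrite generator_minus, generator_ge_ind, generator_const.
  rewrite Hth; nra.
Qed.

Lemma expconv_at_0 (C : nat -> R) (n : nat) : expconv C n 0 = C n.
Proof.
  unfold expconv; destruct n as [|n]; [simpl; field |].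
  rewrite decomp_sum by lia; simpl pred.
  rewrite (sum_eq _ (fun _ => 0)) by (intros i _; simpl; unfold Rdiv; ring).
  rewrite sum_cte, Nat.sub_0_r; simpl; field.
Qed.

Lemma is_derive_sum_f_R0 (g : nat -> R -> R) (dg : nat -> R) (u : R) (n : nat) :
  (forall r, is_derive (g r) u (dg r)) ->
  is_derive (fun v => sum_f_R0 (fun r => g r v) n) u (sum_f_R0 dg n).
Proof.
  intros Hg; induction n as [|n IH]; simpl; [apply Hg |].
  exact (is_derive_plus _ (g (S n)) u _ _ IH (Hg (S n))).
Qed.

Lemma is_derive_exp_term (i : nat) (c u : R) :
  is_derive (fun v => v ^ S i / INR (fact (S i)) * c) u (u ^ i / INR (fact i) * c).
Proof.
  auto_derive; [exact I |].
  change (match i with 0%nat => 1 | S _ => INR i + 1 end) with (INR (S i)).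
  replace (fact i + i * fact i)%nat with (S i * fact i)%nat by ring.
  rewrite mult_INR.
  assert (INR (fact i) <> 0) by apply INR_fact_neq_0.
  assert (INR (S i) <> 0) by (apply not_0_INR; lia).
  field; auto.
Qed.

Lemma is_derive_expconv (C : nat -> R) (m : nat) (u : R) :
  is_derive (expconv C (S m)) u (expconv C m u).
Proof.
  apply is_derive_ext with
    (f := fun v => C (S m) + sum_f_R0 (fun i => v ^ S i / INR (fact (S i)) * C (m - i)%nat) m).
  { intros v; unfold expconv; rewrite (decomp_sum _ (S m)) by lia; simpl pred.
    rewrite Nat.sub_0_r; simpl; f_equal; field. }
  rewrite <- (Rplus_0_l (expconv C m u)).
  apply (is_derive_plus (fun _ => C (S m))); [auto_derive; auto |].
  apply (is_derive_sum_f_R0 (fun i v => v ^ S i / INR (fact (S i)) * C (m - i)%nat)).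
  intros r; apply is_derive_exp_term.
Qed.

Lemma expconv_shift (C : nat -> R) (m : nat) (u : R) : C 0%nat = 0 ->
  sum_f_R0 (fun r => u ^ r / INR (fact r) * INR r * C (S m - r)%nat) m = u * expconv C m u.
Proof.
  intros HC0; unfold expconv; destruct m as [|m]; [simpl; rewrite HC0; ring |].
  rewrite decomp_sum, tech5, Nat.sub_diag, HC0 by lia; simpl pred.
  rewrite Rmult_plus_distr_l, scal_sum.
  replace (u ^ 0 / INR (fact 0) * INR 0 * C (S (S m) - 0)%nat) with 0 by (simpl; ring).
  rewrite !Rmult_0_r, Rplus_0_l, Rplus_0_r.
  apply sum_eq; intros i Hi.
  replace (S (S m) - S i)%nat with (S m - i)%nat by lia.
  rewrite fact_simpl, mult_INR; simpl pow.
  assert (INR (fact i) <> 0) by apply INR_fact_neq_0.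
  assert (INR (S i) <> 0) by (apply not_0_INR; lia).
  field; auto.
Qed.

Lemma expconv_recurrence (C QC : nat -> R) (th mu u : R) (m : nat) :
  C 0%nat = 0 -> QC 0%nat = 0 ->
  (forall k, QC (S k) = mu * (th * C k - (th + INR (S k)) * C (S k))) ->
  expconv QC (S m) u = mu * ((u + th) * expconv C m u - (th + INR (S m)) * expconv C (S m) u).
Proof.
  intros HC0 HQ0 HQ.
  assert (Hlast : expconv C (S m) u
                  = sum_f_R0 (fun r => u ^ r / INR (fact r) * C (S m - r)%nat) m).
  { unfold expconv; rewrite tech5, Nat.sub_diag, HC0; ring. }
  rewrite Hlast; unfold expconv at 1; rewrite tech5, Nat.sub_diag, HQ0, Rmult_0_r, Rplus_0_r.
  rewrite (sum_eq _ (fun r => u ^ r / INR (fact r) * C (m - r)%nat * (mu * th)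
       - u ^ r / INR (fact r) * C (S m - r)%nat * (mu * (th + INR (S m)))
       + u ^ r / INR (fact r) * INR r * C (S m - r)%nat * mu)).
  2:{ intros i Hi; replace (S m - i)%nat with (S (m - i)) by lia.
      rewrite HQ, !S_INR, minus_INR by lia; ring. }
  rewrite plus_sum, minus_sum, <- !scal_sum, expconv_shift by exact HC0.
  unfold expconv; ring.
Qed.

Lemma generator_Rstar (lam mu t : R) (n x : nat) :
  generator lam mu (fun z => Rstar lam mu t z n) x
  = exp (- (lam / mu + INR n) * mu * t) *
    expconv (fun k => generator lam mu (tail_dev (lam / mu) k) x) n (lam / mu * (exp (mu * t) - 1)).
Proof.
  set (th := lam / mu); set (E := exp (- (th + INR n) * mu * t)).
  set (u := th * (exp (mu * t) - 1)).
  rewrite (generator_ext _ _ _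
             (fun z => stat_tail th n + E * expconv (fun k => tail_dev th k z) n u))
    by (intros z; reflexivity).
  rewrite generator_plus, generator_const, Rplus_0_l, generator_scal; f_equal.
  unfold expconv.
  rewrite (generator_sum _ _ (fun r z => u ^ r / INR (fact r) * tail_dev th (n - r) z)).
  apply sum_eq; intros r _; apply generator_scal.
Qed.

Lemma is_derive_Rstar (lam mu t : R) (x n : nat) : 0 < lam -> 0 < mu ->
  is_derive (fun s => Rstar lam mu s x n) t (generator lam mu (fun z => Rstar lam mu t z n) x).
Proof.
  intros Hlam Hmu; rewrite generator_Rstar; set (th := lam / mu).
  set (C := fun k => tail_dev th k x); set (QC := fun k => generator lam mu (tail_dev th k) x).
  assert (HQC0 : QC 0%nat = 0).
  { unfold QC; rewrite (generator_ext _ _ _ (fun _ => 0)) by (intros; apply tail_dev_0).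
    apply generator_const. }
  destruct n as [|m].
  - apply is_derive_ext with (f := fun _ => 1).
    { intros s; unfold Rstar, stat_tail, ge_ind; simpl; field. }
    unfold expconv; simpl; rewrite HQC0; unfold Rdiv; rewrite !Rmult_0_r.
    apply (is_derive_const (V := R_NormedModule)).
  - rewrite (expconv_recurrence C QC th mu _ m (tail_dev_0 th x) HQC0)
      by (intros k; apply generator_tail_dev; assumption).
    set (E := fun s => exp (- (th + INR (S m)) * mu * s)).
    set (u := fun s => th * (exp (mu * s) - 1)).
    assert (HE : is_derive E t (- (th + INR (S m)) * mu * E t)).
    { unfold E; generalize (INR (S m)); intros c; auto_derive; [exact I | ring]. }
    assert (Hu : is_derive u t (mu * (u t + th))).
    { unfold u; auto_derive; [exact I | ring]. }
    assert (Hprod := is_derive_mult E (fun s => expconv C (S m) (u s)) t _ _ HE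
                       (is_derive_comp (expconv C (S m)) u t _ _ (is_derive_expconv C m (u t)) Hu)
                       (fun a b => Rmult_comm a b)).
    assert (Hsum := is_derive_plus (fun _ => stat_tail th (S m)) _ t 0 _
                      (is_derive_const _ _) Hprod).
    match type of Hsum with is_derive _ _ ?l0 =>
      match goal with |- is_derive _ _ ?l => replace l with l0 end end.
    + eapply is_derive_ext; [| exact Hsum]; intros s; reflexivity.
    + unfold plus, mult, scal; simpl; unfold mult; simpl; unfold E, u.
      change (match m with 0%nat => 1 | S _ => INR m + 1 end) with (INR (S m)); ring.
Qed.

Lemma Rstar_solves_backward (lam mu : R) (n : nat) : 0 < lam -> 0 < mu ->
  solves_backward lam mu (fun s z => Rstar lam mu s z n).
Proof.
  intros Hlam Hmu; split; intros x t _.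
  - exact (is_derive_right_deriv _ _ _ (is_derive_Rstar lam mu t x n Hlam Hmu)).
  - exact (is_derive_left_cont _ _ _ (is_derive_Rstar lam mu t x n Hlam Hmu)).
Qed.

Lemma Rstar_at_0 (lam mu : R) (z n : nat) : Rstar lam mu 0 z n = ge_ind n z.
Proof.
  rewrite Rstar_eq, !Rmult_0_r, exp_0, Rminus_diag, Rmult_0_r, expconv_at_0.
  unfold tail_dev; ring.
Qed.

Lemma Rstar_diff_at_0 (lam mu : R) (z y : nat) :
  Rstar lam mu 0 z y - Rstar lam mu 0 z (S y) = if Nat.eqb z y then 1 else 0.
Proof.
  rewrite !Rstar_at_0; unfold ge_ind.
  destruct (Nat.eqb_spec z y), (Nat.leb_spec y z), (Nat.leb_spec (S y) z); try lia; ring.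
Qed.

Lemma Rstar_ge (lam mu t : R) (z n : nat) : (n <= z)%nat -> Rstar lam mu t z n = Rstar lam mu t n n.
Proof.
  intros Hz; rewrite !Rstar_eq; unfold expconv; do 2 f_equal.
  apply sum_eq; intros r _; unfold tail_dev, ge_ind.
  destruct (Nat.leb_spec (n - r) z), (Nat.leb_spec (n - r) n); try lia; reflexivity.
Qed.

Lemma finite_family_bounded (f : nat -> R -> R) (n : nat) (a b : R) :
  (forall z t, (z <= n)%nat -> a <= t <= b -> continuous (f z) t) ->
  exists B, forall z t, (z <= n)%nat -> a <= t <= b -> Rabs (f z t) <= B.
Proof.
  intros Hcont; induction n as [|n IH].
  - destruct (bounded_continuity (f 0%nat) a b (fun t => Hcont 0%nat t (le_n 0))) as [M HM].
    exists M; intros z t Hz Ht; replace z with 0%nat by lia; exact (Rlt_le _ _ (HM t Ht)).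
  - destruct IH as [B HB]; [intros z t Hz; apply Hcont; lia |].
    destruct (bounded_continuity (f (S n)) a b (fun t => Hcont (S n) t (le_n _))) as [M HM].
    exists (Rmax B M); intros z t Hz Ht.
    destruct (Nat.eq_dec z (S n)) as [-> | Hne].
    + exact (Rle_trans _ _ _ (Rlt_le _ _ (HM t Ht)) (Rmax_r B M)).
    + exact (Rle_trans _ _ _ (HB z t ltac:(lia) Ht) (Rmax_l B M)).
Qed.

Lemma Rstar_bounded (lam mu : R) (n : nat) (t0 : R) : 0 < lam -> 0 < mu ->
  exists B, forall t x, 0 <= t <= t0 -> Rabs (Rstar lam mu t x n) <= B.
Proof.
  intros Hlam Hmu.
  destruct (finite_family_bounded (fun z s => Rstar lam mu s z n) n 0 t0) as [B HB].
  { intros z t _ _.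
    exact (ex_derive_continuous _ _ (ex_intro _ _ (is_derive_Rstar lam mu t z n Hlam Hmu))). }
  exists B; intros t x Ht.
  destruct (Nat.le_gt_cases x n) as [Hx | Hx]; [exact (HB x t Hx Ht) |].
  rewrite Rstar_ge by lia; exact (HB n t (le_n _) Ht).
Qed.

Theorem mainTheorem3 (lam mu : R) (P : R -> nat -> nat -> R) :
  0 < lam -> 0 < mu ->
  is_transition_function P ->
  has_rates (qrate lam mu) P ->
  forall (x y : nat) (t : R), 0 <= t ->
    P t x y = Rstar lam mu t x y - Rstar lam mu t x (S y).
Proof.
  intros Hlam Hmu HP Hrates x y t Ht.
  apply (backward_unique lam mu (fun s z => P s z y)
           (fun s z => Rstar lam mu s z y - Rstar lam mu s z (S y)) Hlam (Rlt_le _ _ Hmu));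
    [ exact (P_solves_backward lam mu P HP Hrates y)
    | apply solves_backward_minus; apply Rstar_solves_backward; assumption
    | | | exact Ht].
  - intros z; destruct HP as (_ & _ & H0 & _); rewrite H0; symmetry; apply Rstar_diff_at_0.
  - intros t0 _.
    destruct (Rstar_bounded lam mu y t0 Hlam Hmu) as [B1 HB1].
    destruct (Rstar_bounded lam mu (S y) t0 Hlam Hmu) as [B2 HB2].
    exists (1 + B1 + B2); intros s z Hs.
    pose proof (proj1 HP s z y (proj1 Hs)); pose proof (P_le_1 P HP s z y (proj1 Hs)).
    pose proof (proj1 (Rabs_le_between _ _) (HB1 s z Hs)).
    pose proof (proj1 (Rabs_le_between _ _) (HB2 s z Hs)).
    apply Rabs_le; lra.
Qed.
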